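(* Let $K$ be a field, $P=K[x_1,\dots,x_n]$, $g_1,\dots,g_r\in P\setminus\{0\}$ such that $I=\langle g_1,\dots,g_r\rangle$ is a proper ideal, and let $Z=(z_1,\dots,z_s)$ be a tuple of distinct indeterminates among $x_1,\dots,x_n$. The procedure $\mathrm{OPTCHECK}$ applied to $(g_1,\dots,g_r)$ and $Z$ terminates and returns either ``Fail'' or a tuple $W\in\mathbb{N}^n$. If it returns a tuple $W$, then there exists a $Z$-separating tuple $(f_1,\dots,f_s)$ of polynomials in $I$ such that every term ordering $\sigma$ compatible with the grading given by $W$ satisfies $\operatorname{LT}_\sigma(f_i)=z_i$ for $i=1,\dots,s$.
   Context: $\operatorname{Supp}(f)$ is the set of terms occurring in $f$; $\operatorname{Lin}(f)$ is the homogeneous degree-1 component of $f$; $\langle\cdot\rangle_K$ denotes $K$-linear span; $P_{\le\delta}$ is the set of polynomials of degree $\le\delta$. A tuple $(f_1,\dots,f_s)$ of polynomials in an ideal $I$ is $Z$-separating if there is a term ordering $\sigma$ with $\operatorname{LT}_\sigma(f_i)=z_i$ for all $i$. For $W\in\mathbb{N}^n$ the $W$-degree of $x_1^{a_1}\cdots x_n^{a_n}$ is $\sum w_ia_i$; a term ordering $\sigma$ is compatible with the grading given by $W$ if $t>_\sigma t'$ whenever the $W$-degree of $t$ exceeds that of $t'$. Procedure $\mathrm{LI}$ (linear interreduction), applied to a tuple $Z=(z_1,\dots,z_s)$ of distinct indeterminates and polynomials $g_1,\dots,g_r$: let $t_1>\dots>t_m$ (lexicographic order, $x_1>\dots>x_n$)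 be the terms of $\bigcup_j\operatorname{Supp}(g_j)$ other than $z_1,\dots,z_s$; form the coefficient matrix $M$ of $g_1,\dots,g_r$ w.r.t. column order $(z_1,\dots,z_s,t_1,\dots,t_m)$; output the polynomials whose coefficient vectors are the nonzero rows of the reduced row echelon form of $M$, in order. Procedure $\mathrm{OPTCHECK}$ on input $(g_1,\dots,g_r)$ and $Z$: (1) set $w_1=\dots=w_n=0$, $\delta=\max_j\deg(g_j)$, $d=1$. (2) In each $g_j$ delete every monomial not divisible by some indeterminate of $Z$. (3) If $\dim_K\langle\operatorname{Lin}(g_1),\dots,\operatorname{Lin}(g_r)\rangle_K<\#Z$, return ``Fail''. (4) Repeat: (i) form $H=\{x_ig_j : x_i\text{ an indeterminate not in the current }Z,\ j=1,\dots,r\}$ from the current list; fix a degree-compatible term ordering $\tau$ and compute a $K$-basis $h_1,\dots,h_m$ of $\langle H\rangle_K$ with pairwise distinct $\tau$-leading terms; let $q_1,\dots,q_u$ be those $h_k$ lying in $P_{\le\delta}$; replace the current list by the output of $\mathrm{LI}$ applied to the current $Z$ and $(g_1,\dots,g_r,q_1,\dots,q_u)$; (ii) let $\widetilde Z$ be the set of indeterminates of the current $Z$ that occur as elements of the current list; (iii) if $\widetilde Z=\emptyset$, return ``Fail''; (iv) for each $z\in\widetilde Z$, say $z=x_k$, set $w_k=d$ and remove $z$ from $Z$; (v) in each current $g_j$ delete every monomial not divisible by some indeterminate of the (updated) $Z$; (vi) replace $d$ by $2\delta d+1$; until $Z$ is empty. (5) Return $W=(w_1,\dots,w_n)$. 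*)

From mathcomp Require Import all_boot all_order all_algebra.
From mathcomp Require Export mpoly.
From Stdlib Require Export Relations.

Set Implicit Arguments.
Unset Strict Implicit.
Unset Printing Implicit Defensive.

Import GRing.Theory.
Local Open Scope ring_scope.

Section OptCheck.

Variables (K : fieldType) (n : nat).

Notation mon := 'X_{1..n}.
Notation poly := {mpoly K[n]}.

Definition term_ordering (lt : rel mon) : Prop :=
  [/\ forall t, ~~ lt t t,
      forall t1 t2 t3, lt t1 t2 -> lt t2 t3 -> lt t1 t3,
      forall t t', t != t' -> lt t t' || lt t' t,
      forall t t' u, lt t t' -> lt (t + u)%MM (t' + u)%MM
    & forall t, t != 0%MM -> lt 0%MM t].

Definition is_LT (lt : rel mon) (f : poly) (t : mon) : Prop :=
  t \in msupp f /\ forall t', t' \in msupp f -> t' != t -> lt t' t.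

Definition wdeg (W : 'I_n -> nat) (t : mon) : nat := (\sum_(i < n) W i * t i)%N.

Definition W_compatible (W : 'I_n -> nat) (lt : rel mon) : Prop :=
  forall t t', (wdeg W t' < wdeg W t)%N -> lt t' t.

Definition deg_compatible (lt : rel mon) : Prop :=
  forall t t', (mdeg t' < mdeg t)%N -> lt t' t.

(* total degree of a polynomial (deg 0 = 0) *)
Definition pdeg (f : poly) : nat := \max_(m <- msupp f) mdeg m.

Definition in_span (gs : seq poly) (f : poly) : Prop :=
  exists c : 'I_(size gs) -> K, f = \sum_(j < size gs) c j *: gs`_j.

Definition same_span (gs hs : seq poly) : Prop :=
  (forall f, in_span gs f -> in_span hs f) /\ (forall f, in_span hs f -> in_span gs f).

Definition lin_indep (gs : seq poly) : Prop :=
  forall c : 'I_(size gs) -> K,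
    \sum_(j < size gs) c j *: gs`_j = 0 -> forall j, c j = 0.

Definition in_ideal (gs : seq poly) (f : poly) : Prop :=
  exists c : 'I_(size gs) -> poly, f = \sum_(j < size gs) c j * gs`_j.

Definition zterm (Z : seq 'I_n) (i : 'I_(size Z)) : mon := U_(tnth (in_tuple Z) i)%MM.

Definition Z_separating (Z : seq 'I_n) (f : 'I_(size Z) -> poly) : Prop :=
  exists lt, term_ordering lt /\ forall i, is_LT lt (f i) (zterm i).

(* lexicographic order with x_1 > ... > x_n : lexgt t t' iff t >_lex t' *)
Definition lexgt (t t' : mon) : bool :=
  [exists k : 'I_n, [forall i : 'I_n, (i < k)%N ==> (t i == t' i)] && (t' k < t k)%N].

Definition isZterm (Z : seq 'I_n) (t : mon) : bool := has (fun z => t == U_(z)%MM) Z.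
Definition zpos (Z : seq 'I_n) (t : mon) : nat := find (fun z => t == U_(z)%MM) Z.

(* column order (z_1, ..., z_s, t_1, ..., t_m): colbefore Z t t' iff the
   column of t comes strictly before the column of t' *)
Definition colbefore (Z : seq 'I_n) (t t' : mon) : bool :=
  if isZterm Z t then (if isZterm Z t' then (zpos Z t < zpos Z t')%N else true)
  else ~~ isZterm Z t' && lexgt t t'.

Definition is_pivot (Z : seq 'I_n) (f : poly) (t : mon) : Prop :=
  t \in msupp f /\ forall t', t' \in msupp f -> t' != t -> colbefore Z t t'.

(* hs is the sequence of (nonzero) rows of the reduced row echelon form of the
   coefficient matrix of gs, w.r.t. the column order above; i.e. hs is in
   reduced row echelon form and has the same row space as gs. *)
Definition LI (Z : seq 'I_n) (gs hs : seq poly) : Prop :=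
  same_span gs hs /\
  exists piv : seq mon,
    [/\ size piv = size hs,
        forall j, (j < size hs)%N -> hs`_j != 0 /\ is_pivot Z hs`_j (nth 0%MM piv j),
        forall j, (j < size hs)%N -> hs`_j@_(nth 0%MM piv j) = 1,
        forall j k, (j < k < size hs)%N -> colbefore Z (nth 0%MM piv j) (nth 0%MM piv k)
      & forall j k, (j < size hs)%N -> (k < size hs)%N -> j != k ->
                    hs`_k@_(nth 0%MM piv j) = 0].

Definition restrictZ (Z : seq 'I_n) (f : poly) : poly :=
  \sum_(m <- msupp f | has (fun z => (0 < m z)%N) Z) f@_m *: 'X_[m].

(* coefficient matrix of Lin(g_1), ..., Lin(g_r) w.r.t. x_1, ..., x_n;
   its rank is dim_K <Lin(g_1),...,Lin(g_r)>_K *)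
Definition linmx (gs : seq poly) : 'M[K]_(size gs, n) :=
  \matrix_(j < size gs, i < n) gs`_j@_(U_(i)%MM).

Definition Hset (Z : seq 'I_n) (gs : seq poly) : seq poly :=
  [seq 'X_i * g | i <- [seq i <- enum 'I_n | i \notin Z], g <- gs].

Definition LT_basis (lt : rel mon) (H hs : seq poly) : Prop :=
  [/\ all (fun h => h != 0) hs, lin_indep hs, same_span H hs
    & exists lts : seq mon, [/\ size lts = size hs, uniq lts
        & forall j, (j < size hs)%N -> is_LT lt hs`_j (nth 0%MM lts j)]].

(* states of the repeat-loop of step (4): current Z, current list, current
   weights w, current d; or the returned value (None = "Fail"). *)
Inductive ocstate :=
| OCLoop of seq 'I_n & seq poly & ('I_n -> nat) & nat
| OCDone of option ('I_n -> nat).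

(* steps (1)-(3) *)
Definition oc_init (gs : seq poly) (Z : seq 'I_n) : ocstate :=
  let gs0 := map (restrictZ Z) gs in
  if (\rank (linmx gs0) < size Z)%N then OCDone None
  else OCLoop Z gs0 (fun _ => 0%N) 1%N.

(* steps (ii)-(vi) and the "until" test, after the list has become gs' *)
Definition oc_after (delta : nat) (Z : seq 'I_n) (gs' : seq poly)
    (w : 'I_n -> nat) (d : nat) : ocstate :=
  let Zt := [seq z <- Z | 'X_z \in gs'] in
  if Zt == [::] then OCDone None else
  let Z' := [seq z <- Z | z \notin Zt] in
  let w' := fun k => if k \in Zt then d else w k in
  let gs'' := map (restrictZ Z') gs' in
  if Z' == [::] then OCDone (Some w')
  else OCLoop Z' gs'' w' (2 * delta * d + 1)%N.

(* one iteration of the repeat-loop; step (i) is nondeterministic in the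
   choice of the degree-compatible term ordering tau and of the basis hs. *)
Inductive oc_step (delta : nat) : ocstate -> ocstate -> Prop :=
| OCStep Z gs w d (tau : rel mon) hs gs' :
    term_ordering tau -> deg_compatible tau ->
    LT_basis tau (Hset Z gs) hs ->
    LI Z (gs ++ [seq h <- hs | (pdeg h <= delta)%N]) gs' ->
    oc_step delta (OCLoop Z gs w d) (oc_after delta Z gs' w d).

Definition oc_reach (delta : nat) : ocstate -> ocstate -> Prop :=
  clos_refl_trans ocstate (oc_step delta).

End OptCheck.

Arguments OCLoop {K n}.
Arguments OCDone {K n}.

(* Each pass of the loop removes at least one indeterminate from Z, so the loop
   terminates; a pass never gets stuck, since bases with pairwise distinct leading
   terms and reduced row echelon forms always exist (Gaussian elimination).

   For correctness, let dp be the value of d in the previous pass.  Every polynomial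
   g of the current list has degree at most delta and is congruent modulo I to a
   combination of terms containing no indeterminate of Z and of W-degree at most
   delta * dp.  Multiplying by some x_i outside Z (weight at most dp) and taking
   linear combinations raises this bound to delta * dp + dp < d.  Hence when x_z
   occurs in the interreduced list and receives the weight d, some f_z in I differs
   from x_z only by Z-free terms of W-degree below w_z; later weights go to
   indeterminates of Z only, so these W-degrees never change.  Deleting the terms
   without indeterminates of the new Z keeps the bound delta * d, since they have
   degree at most delta and all weights are at most d.  At the end x_z is the
   largest term of f_z for every ordering compatible with W. *)

From mathcomp Require Import all_boot all_order all_algebra.
From mathcomp Require Import mpoly zify.
From Stdlib Require Import Relations Wf_nat Inclusion ClassicalEpsilon.

Set Implicit Arguments.
Unset Strict Implicit.
Unset Printing Implicit Defensive.

Import GRing.Theory Order.TTheory.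
Local Open Scope ring_scope.

Section Spans.
Variables (K : fieldType) (n : nat).
Notation mon := 'X_{1..n}.
Notation poly := {mpoly K[n]}.
Implicit Types (gs hs : seq poly) (f g : poly).

Lemma in_span_ind (P : poly -> Prop) gs :
  P 0 -> (forall f g, P f -> P g -> P (f + g)) ->
  (forall c f, P f -> P (c *: f)) -> (forall f, f \in gs -> P f) ->
  forall f, in_span gs f -> P f.
Proof.
move=> P0 PD PZ Pgs f [c ->]; elim/big_ind: _ => // j _.
by apply: PZ; apply: Pgs; apply: mem_nth.
Qed.

Lemma in_span0 gs : in_span gs 0.
Proof. by exists (fun=> 0); rewrite big1 // => j _; rewrite scale0r. Qed.

Lemma in_spanD gs f g : in_span gs f -> in_span gs g -> in_span gs (f + g).
Proof.
move=> [c1 ->] [c2 ->]; exists (fun j => c1 j + c2 j).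
by rewrite -big_split; apply: eq_bigr => j _; rewrite scalerDl.
Qed.

Lemma in_spanZ gs c f : in_span gs f -> in_span gs (c *: f).
Proof.
move=> [c1 ->]; exists (fun j => c * c1 j).
by rewrite scaler_sumr; apply: eq_bigr => j _; rewrite scalerA.
Qed.

Lemma in_spanB gs f g : in_span gs f -> in_span gs g -> in_span gs (f - g).
Proof. by move=> sf sg; rewrite -scaleN1r; apply/in_spanD/in_spanZ. Qed.

Lemma in_span_sum gs (I : eqType) (r : seq I) (F : I -> poly) :
  (forall i, i \in r -> in_span gs (F i)) -> in_span gs (\sum_(i <- r) F i).
Proof.
move=> sF; rewrite big_seq; elim/big_ind: _ => //; [exact: in_span0 | exact: in_spanD].
Qed.

Lemma in_span_mem gs f : f \in gs -> in_span gs f.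
Proof.
move=> fgs; have lt_fgs : (index f gs < size gs)%N by rewrite index_mem.
exists (fun j => (val j == index f gs)%:R).
rewrite (bigD1 (Ordinal lt_fgs)) //= eqxx scale1r nth_index // big1 ?addr0 //.
by move=> j /negbTE; rewrite -val_eqE /= => ->; rewrite scale0r.
Qed.

Lemma in_span_subset gs hs :
  (forall f, f \in gs -> in_span hs f) -> forall f, in_span gs f -> in_span hs f.
Proof. by move=> sub; apply: in_span_ind; [exact: in_span0|exact: in_spanD|exact: in_spanZ|]. Qed.

Lemma in_span_cons gs g f : in_span gs f -> in_span (g :: gs) f.
Proof. by apply: in_span_subset => h hgs; apply: in_span_mem; rewrite in_cons hgs orbT. Qed.

Lemma same_spanP gs hs :
  (forall f, f \in gs -> in_span hs f) -> (forall f, f \in hs -> in_span gs f) ->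
  same_span gs hs.
Proof. by move=> sub1 sub2; split; apply: in_span_subset. Qed.

Lemma same_span_trans gs1 gs2 gs3 :
  same_span gs1 gs2 -> same_span gs2 gs3 -> same_span gs1 gs3.
Proof. by move=> [h1 h2] [h3 h4]; split=> f sf; auto. Qed.

Lemma same_span_cons g gs hs : same_span gs hs -> same_span (g :: gs) (g :: hs).
Proof.
move=> [sub1 sub2]; apply: same_spanP => f; rewrite in_cons => /orP[/eqP->|fin];
  by [apply/in_span_mem/mem_head | apply/in_span_cons/sub1/in_span_mem
     | apply/in_span_cons/sub2/in_span_mem].
Qed.

Lemma same_span_perm gs hs : perm_eq gs hs -> same_span gs hs.
Proof.
move=> pgh; apply: same_spanP => f fin; apply: in_span_mem;
  by rewrite ?(perm_mem pgh) // -(perm_mem pgh).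
Qed.

Lemma in_ideal0 gs : in_ideal gs 0.
Proof. by exists (fun=> 0); rewrite big1 // => j _; rewrite mul0r. Qed.

Lemma in_idealD gs f g : in_ideal gs f -> in_ideal gs g -> in_ideal gs (f + g).
Proof.
move=> [c1 ->] [c2 ->]; exists (fun j => c1 j + c2 j).
by rewrite -big_split; apply: eq_bigr => j _; rewrite mulrDl.
Qed.

Lemma in_idealMl gs p f : in_ideal gs f -> in_ideal gs (p * f).
Proof.
move=> [c ->]; exists (fun j => p * c j).
by rewrite mulr_sumr; apply: eq_bigr => j _; rewrite mulrA.
Qed.

Lemma in_idealZ gs c f : in_ideal gs f -> in_ideal gs (c *: f).
Proof. by rewrite -mul_mpolyC; apply: in_idealMl. Qed.

Lemma in_ideal_mem gs f : f \in gs -> in_ideal gs f.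
Proof.
move=> fgs; have lt_fgs : (index f gs < size gs)%N by rewrite index_mem.
exists (fun j => (val j == index f gs)%:R).
rewrite (bigD1 (Ordinal lt_fgs)) //= eqxx mul1r nth_index // big1 ?addr0 //.
by move=> j /negbTE; rewrite -val_eqE /= => ->; rewrite mul0r.
Qed.

Definition supported (P : mon -> Prop) f := forall m, m \in msupp f -> P m.

Lemma supported0 P : supported P 0.
Proof. by move=> m; rewrite msupp0. Qed.

Lemma supportedD P f g : supported P f -> supported P g -> supported P (f + g).
Proof. by move=> sf sg m /msuppD_le; rewrite mem_cat => /orP[/sf|/sg]. Qed.

Lemma supportedZ P c f : supported P f -> supported P (c *: f).
Proof. by move=> sf m /msuppZ_le /sf. Qed.

Lemma supported_sub (P Q : mon -> Prop) f :
  (forall m, P m -> Q m) -> supported P f -> supported Q f.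
Proof. by move=> PQ sf m /sf /PQ. Qed.

Lemma supported_span P gs f :
  (forall g, g \in gs -> supported P g) -> in_span gs f -> supported P f.
Proof.
by move=> Pgs; apply: in_span_ind Pgs f; [exact: supported0|exact: supportedD|exact: supportedZ].
Qed.

Lemma supportedMX (P Q : mon -> Prop) (i : 'I_n) f :
  (forall m, P m -> Q (U_(i) + m)%MM) -> supported P f -> supported Q ('X_i * f).
Proof.
move=> PQ sf m; rewrite mulrC (perm_mem (msuppMX _ _)) => /mapP [m0 m0in ->].
by apply: PQ; apply: sf.
Qed.

Lemma supported_sumX (P : mon -> Prop) (Q : pred mon) (r : seq mon) f :
  (forall m, m \in r -> Q m -> P m) -> supported P (\sum_(m <- r | Q m) f@_m *: 'X_[m]).
Proof.
move=> QP; rewrite big_seq_cond; elim/big_ind: _; [exact: supported0|exact: supportedD|].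
move=> m /andP[mr Qm]; apply: supportedZ => t; rewrite msuppX mem_seq1 => /eqP ->.
exact: QP.
Qed.

End Spans.

Section TermOrders.
Variable n : nat.
Notation mon := 'X_{1..n}.
Implicit Types (t u : mon) (W : 'I_n -> nat).

Definition mnmc_lt : rel mon := fun t u => (t < u)%O.

Lemma mnmc_term_ordering : term_ordering mnmc_lt.
Proof.
split=> [t|t1 t2 t3|t u /lt_total //|t u v|t t0]; rewrite /mnmc_lt.
- by rewrite ltxx.
- exact: lt_trans.
- by rewrite ltmc_add2l.
- by rewrite lt_neqAle le0m andbT eq_sym.
Qed.

Lemma mnmc_deg_compatible : deg_compatible mnmc_lt.
Proof. by move=> t u; apply: lt_mdeg_ltmc. Qed.

Definition weight_refinement (phi : mon -> nat) (lt : rel mon) : rel mon :=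
  fun t u => (phi t < phi u)%N || (phi t == phi u) && lt t u.

Lemma weight_refinement_term_ordering (phi : mon -> nat) (lt : rel mon) :
  {morph phi : t u / (t + u)%MM >-> (t + u)%N} ->
  term_ordering lt -> term_ordering (weight_refinement phi lt).
Proof.
move=> phiD [irr tr tot mul pos]; rewrite /weight_refinement; split.
- by move=> t; rewrite ltnn eqxx irr.
- move=> t1 t2 t3 /orP[h1|/andP[/eqP e1 h1]] /orP[h2|/andP[/eqP e2 h2]].
  + by rewrite (ltn_trans h1 h2).
  + by rewrite -e2 h1.
  + by rewrite e1 h2.
  + by rewrite e1 e2 eqxx (tr _ _ _ h1 h2) orbT.
- by move=> t u /tot; case: ltngtP.
- move=> t u v; rewrite !phiD ltn_add2r eqn_add2r.
  by case/orP=> [->//|/andP[-> /mul ->]]; rewrite orbT.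
- have phi0 : phi 0%MM = 0%N.
    by apply/eqP; rewrite -(eqn_add2l (phi 0%MM)) addn0 -phiD addm0.
  by move=> t /pos ->; rewrite phi0 andbT; case: (phi t).
Qed.

Lemma wdegD W : {morph wdeg W : t u / (t + u)%MM >-> (t + u)%N}.
Proof. by move=> t u; rewrite /wdeg -big_split; apply: eq_bigr => i _; rewrite mnmDE mulnDr. Qed.

Lemma wdegU W (i : 'I_n) : wdeg W U_(i)%MM = W i.
Proof.
rewrite /wdeg (bigD1 i) //= mnm1E eqxx muln1 big1 ?addn0 // => j /negbTE.
by rewrite mnm1E eq_sym => ->; rewrite muln0.
Qed.

Lemma eq_wdeg W W' t : (forall i, t i != 0%N -> W i = W' i) -> wdeg W t = wdeg W' t.
Proof.
by move=> eqW; apply: eq_bigr => i _; case: (eqVneq (t i) 0%N) => [->|/eqW ->]; rewrite ?muln0.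
Qed.

Lemma wdeg_le_mdeg W D t : (forall i, (W i <= D)%N) -> (wdeg W t <= D * mdeg t)%N.
Proof.
by move=> WD; rewrite mdegE big_distrr; apply: leq_sum => i _; rewrite leq_mul2r WD orbT.
Qed.

Lemma W_compatible_exists W : exists lt, term_ordering lt /\ W_compatible W lt.
Proof.
exists (weight_refinement (wdeg W) mnmc_lt); split => [|t u lt_tu].
- exact/weight_refinement_term_ordering/mnmc_term_ordering/wdegD.
- by rewrite /weight_refinement lt_tu.
Qed.

Lemma lexgt_trans t1 t2 t3 : lexgt t1 t2 -> lexgt t2 t3 -> lexgt t1 t3.
Proof.
move=> /existsP[k1 /andP[/forallP e1 l1]] /existsP[k2 /andP[/forallP e2 l2]].
have eq12 (i : 'I_n) : (i < k1)%N -> t1 i = t2 i by move/(implyP (e1 i))/eqP.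
have eq23 (i : 'I_n) : (i < k2)%N -> t2 i = t3 i by move/(implyP (e2 i))/eqP.
apply/existsP; case: (ltngtP k1 k2) => [k12|k21|/val_inj k12].
- exists k1; rewrite -(eq23 _ k12) l1 andbT; apply/forallP => i; apply/implyP => ik.
  by rewrite eq12 // eq23 // (ltn_trans ik k12).
- exists k2; rewrite (eq12 _ k21) l2 andbT; apply/forallP => i; apply/implyP => ik.
  by rewrite eq12 ?eq23 // (ltn_trans ik k21).
- subst k2; exists k1; rewrite (ltn_trans l2 l1) andbT; apply/forallP => i; apply/implyP => ik.
  by rewrite eq12 ?eq23.
Qed.

Lemma lexgt_total t u : t != u -> lexgt t u || lexgt u t.
Proof.
move=> ne_tu; have [i0 ne_i0] : exists i, t i != u i.
  apply/existsP; apply: contraNT ne_tu => /existsPn eq_tu; apply/eqP/mnmP => i.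
  by apply/eqP; move: (eq_tu i); rewrite negbK.
case: (@arg_minnP _ i0 (fun i => t i != u i) (fun i : 'I_n => i : nat) ne_i0) => k ne_k min_k.
have eq_below : [forall i : 'I_n, (i < k)%N ==> (t i == u i)].
  by apply/forallP => i; apply/implyP; apply: contraLR => /min_k; rewrite -leqNgt.
move: ne_k; rewrite neq_ltn => /orP[lt_k|lt_k]; apply/orP; [right|left];
  apply/existsP; exists k; rewrite lt_k andbT //.
by apply/forallP => i; apply/implyP => ik; rewrite eq_sym (implyP (forallP eq_below i)).
Qed.

Lemma zpos_inj (Z : seq 'I_n) t u :
  isZterm Z t -> isZterm Z u -> zpos Z t = zpos Z u -> t = u.
Proof.
rewrite /isZterm /zpos; case: Z => [//|z0 Z] Zt Zu eq_pos.
move: (nth_find z0 Zt) (nth_find z0 Zu); rewrite eq_pos => /eqP Et /eqP Eu.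
exact: etrans Et (esym Eu).
Qed.

Lemma colbefore_trans (Z : seq 'I_n) t1 t2 t3 :
  colbefore Z t1 t2 -> colbefore Z t2 t3 -> colbefore Z t1 t3.
Proof.
rewrite /colbefore; case: (isZterm Z t1); case: (isZterm Z t2); case: (isZterm Z t3) => //=.
all: first [exact: ltn_trans | exact: lexgt_trans].
Qed.

Lemma colbefore_total (Z : seq 'I_n) t u : t != u -> colbefore Z t u || colbefore Z u t.
Proof.
move=> ne_tu; rewrite /colbefore.
case Zt: (isZterm Z t); case Zu: (isZterm Z u) => //=; last exact: lexgt_total.
by rewrite -neq_ltn; apply: contra ne_tu => /eqP /(zpos_inj Zt Zu) ->.
Qed.

End TermOrders.

Section RowEchelon.
Variables (K : fieldType) (n : nat).
Notation mon := 'X_{1..n}.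
Notation poly := {mpoly K[n]}.
Variable bef : rel mon.
Hypothesis bef_trans : forall t1 t2 t3, bef t1 t2 -> bef t2 t3 -> bef t1 t3.
Hypothesis bef_total : forall t u, t != u -> bef t u || bef u t.

Definition first_term (f : poly) (t : mon) :=
  t \in msupp f /\ forall u, u \in msupp f -> u != t -> bef t u.

Lemma first_in_seq (l : seq mon) :
  l != [::] -> exists2 t, t \in l & forall u, u \in l -> u != t -> bef t u.
Proof.
elim: l => [//|a l IHl] _; case: (eqVneq l [::]) => [->|/IHl [t tl min_t]].
  by exists a => [|u]; rewrite mem_seq1 // => /eqP ->; rewrite eqxx.
have [->|ne_at] := eqVneq a t.
  by exists t => [|u]; rewrite in_cons ?tl ?orbT // => /orP[/eqP->|/min_t //]; rewrite eqxx.
case/orP: (bef_total ne_at) => [bef_at|bef_ta].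
- exists a => [|u]; first by rewrite mem_head.
  rewrite in_cons => /orP[/eqP->|ul]; first by rewrite eqxx.
  by move=> _; have [->//|/(min_t _ ul)] := eqVneq u t; apply: bef_trans.
- by exists t => [|u]; rewrite in_cons ?tl ?orbT // => /orP[/eqP->|/min_t //].
Qed.

Lemma first_term_exists (f : poly) : f != 0 -> exists t, first_term f t.
Proof. by rewrite -msupp_eq0 => /first_in_seq [t ft min_t]; exists t. Qed.

(* Rows paired with their pivots: reduced echelon form, but not yet sorted. *)
Definition echelon (s : seq (poly * mon)) :=
  [/\ uniq s, {in s &, forall x y, x.2 = y.2 -> x = y},
      forall x, x \in s -> first_term x.1 x.2 /\ x.1@_x.2 = 1
    & forall x y, x \in s -> y \in s -> x.2 != y.2 -> y.1@_x.2 = 0].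

Definition eliminate (r : poly) (p : mon) (x : poly * mon) := (x.1 - x.1@_p *: r, x.2).

Lemma eliminate_coef r p x t : (eliminate r p x).1@_t = x.1@_t - x.1@_p * r@_t.
Proof. by rewrite mcoeffB mcoeffZ. Qed.

Section AddRow.
Variables (s : seq (poly * mon)) (r : poly) (p : mon).
Hypotheses (ech_s : echelon s) (first_r : first_term r p) (r_p : r@_p = 1).
Hypothesis r_pivots : forall y, y \in s -> r@_y.2 = 0.

Let pivot_new y : y \in s -> y.2 != p.
Proof. by move=> ys; apply: contra_eqN (r_pivots ys) => /eqP ->; rewrite r_p oner_neq0. Qed.

Lemma eliminate_echelon_row x :
  x \in s -> first_term (eliminate r p x).1 x.2 /\ (eliminate r p x).1@_x.2 = 1.
Proof.
case: ech_s => _ _ rows _ xs; have [[x2_supp first_x] x_1] := rows x xs.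
rewrite eliminate_coef r_pivots // mulr0 subr0 x_1; split => //; split.
  by rewrite mcoeff_msupp eliminate_coef r_pivots // mulr0 subr0 x_1 oner_neq0.
move=> u /msuppB_le; rewrite mem_cat => /orP[/first_x //|u_supp ne_ux].
have c_nz : x.1@_p != 0.
  by apply: contraTneq u_supp => ->; rewrite scale0r msupp0.
have bef_xp : bef x.2 p by apply: first_x; rewrite ?mcoeff_msupp // eq_sym pivot_new.
move/msuppZ_le: u_supp; have [->//|ne_up /(first_r.2 _)] := eqVneq u p.
by move/(_ ne_up); apply: bef_trans.
Qed.

Lemma echelon_add : echelon ((r, p) :: map (eliminate r p) s).
Proof.
case: ech_s => uniq_s inj_s rows cross.
have memP z : z \in (r, p) :: map (eliminate r p) s ->
    z = (r, p) \/ exists2 x, x \in s & z = eliminate r p x.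
  by rewrite in_cons => /orP[/eqP->|/mapP[x xs ->]]; [left|right; exists x].
split.
- rewrite /= map_inj_in_uniq ?uniq_s ?andbT; last by move=> x y xs ys [_]; apply: inj_s.
  by apply/mapP => -[x xs [_ e]]; move: (pivot_new xs); rewrite -e eqxx.
- move=> z1 z2 /memP[->|[x xs ->]] /memP[->|[y ys ->]] //= e.
  + by move: (pivot_new ys); rewrite e eqxx.
  + by move: (pivot_new xs); rewrite e eqxx.
  + by rewrite (inj_s x y xs ys e).
- by move=> z /memP[->|[x xs ->]]; [|exact: eliminate_echelon_row].
- move=> z1 z2 /memP[->|[x xs ->]] /memP[->|[y ys ->]] //=; rewrite ?eqxx //.
  + by move=> _; rewrite eliminate_coef r_p mulr1 subrr.
  + by move=> _; rewrite r_pivots.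
  + by move=> ne_xy; rewrite eliminate_coef (cross x y) // r_pivots // mulr0 subr0.
Qed.

End AddRow.

Lemma same_span_eliminate s r p :
  same_span (r :: map fst s) (map fst ((r, p) :: map (eliminate r p) s)).
Proof.
have r_in : in_span (map fst ((r, p) :: map (eliminate r p) s)) r.
  by apply: in_span_mem; rewrite mem_head.
apply: same_spanP => f; rewrite in_cons => /orP[/eqP-> //|].
- move=> /mapP[x xs ->]; have -> : x.1 = (eliminate r p x).1 + x.1@_p *: r by rewrite subrK.
  apply: in_spanD; last exact: in_spanZ.
  by apply: in_span_mem; rewrite in_cons map_f ?orbT // map_f.
- by apply: in_span_mem; rewrite mem_head.
- move=> /mapP[_ /mapP[x xs ->] ->]; apply: in_spanB; last exact/in_spanZ/in_span_mem/mem_head.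
  by apply: in_span_mem; rewrite in_cons map_f ?orbT.
Qed.

Lemma echelon_coef_sum s g y : echelon s -> y \in s ->
  (\sum_(x <- s) g@_x.2 *: x.1)@_y.2 = g@_y.2.
Proof.
case=> uniq_s inj_s rows cross ys.
rewrite raddf_sum (bigD1_seq y) //= mcoeffZ (rows y ys).2 mulr1.
rewrite big1_seq ?addr0 // => x /andP[ne_xy xs]; rewrite mcoeffZ (cross y x) ?mulr0 //.
by apply: contra ne_xy => /eqP e; apply/eqP; apply: inj_s xs ys (esym e).
Qed.

Lemma echelon_cons s g : echelon s ->
  exists s', echelon s' /\ same_span (g :: map fst s) (map fst s').
Proof.
move=> ech_s; set sum := \sum_(x <- s) g@_x.2 *: x.1; set r := g - sum.
have sum_span : in_span (map fst s) sum.
  by apply: in_span_sum => x xs; apply/in_spanZ/in_span_mem/map_f.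
have r_pivots y : y \in s -> r@_y.2 = 0.
  by move=> ys; rewrite mcoeffB echelon_coef_sum // subrr.
have [r0|nz_r] := eqVneq r 0.
  exists s; split => //; apply: same_spanP => f; last by move/in_span_mem/in_span_cons.
  rewrite in_cons => /orP[/eqP->|/in_span_mem //].
  by have -> : g = sum by apply/eqP; rewrite -subr_eq0 -/r r0.
have [p [p_supp min_p]] := first_term_exists nz_r.
have nz_c : r@_p != 0 by rewrite -mcoeff_msupp.
set r' := (r@_p)^-1 *: r.
have supp_r' : msupp r' =i msupp r by apply/perm_mem/msuppZ; rewrite invr_eq0.
have first_r' : first_term r' p by split=> [|u]; rewrite supp_r' //; apply: min_p.
have r'_p : r'@_p = 1 by rewrite mcoeffZ mulVf.
have r'_pivots y : y \in s -> r'@_y.2 = 0 by move=> ys; rewrite mcoeffZ r_pivots ?mulr0.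
exists ((r', p) :: map (eliminate r' p) s); split; first exact: echelon_add.
apply: (same_span_trans _ (same_span_eliminate s r' p)); apply: same_spanP => f;
  rewrite in_cons => /orP[/eqP->|/in_span_mem/in_span_cons //].
- have -> : g = r@_p *: r' + sum by rewrite scalerA divff // scale1r subrK.
  by apply: in_spanD; [apply/in_spanZ/in_span_mem/mem_head | exact: in_span_cons].
- by apply: in_spanZ; apply: in_spanB; [apply/in_span_mem/mem_head | exact: in_span_cons].
Qed.

Lemma echelon_exists gs : exists s, echelon s /\ same_span gs (map fst s).
Proof.
elim: gs => [|g gs [s [ech_s span_s]]]; first by exists [::]; split=> //; split.
have [s' [ech_s' span_s']] := echelon_cons g ech_s.
by exists s'; split=> //; apply: same_span_trans span_s'; apply: same_span_cons.
Qed.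

(* [LI Z] is [rref (colbefore Z)]; [LT_basis tau] is obtained from [rref] for the
   reversed [tau]. *)
Definition rref (gs hs : seq poly) :=
  same_span gs hs /\
  exists piv : seq mon,
    [/\ size piv = size hs,
        forall j, (j < size hs)%N -> hs`_j != 0 /\ first_term hs`_j (nth 0%MM piv j),
        forall j, (j < size hs)%N -> hs`_j@_(nth 0%MM piv j) = 1,
        forall j k, (j < k < size hs)%N -> bef (nth 0%MM piv j) (nth 0%MM piv k)
      & forall j k, (j < size hs)%N -> (k < size hs)%N -> j != k ->
                    hs`_k@_(nth 0%MM piv j) = 0].

Lemma rref_exists gs : exists hs, rref gs hs.
Proof.
have [s [[uniq_s inj_s rows cross] span_s]] := echelon_exists gs.
pose le (x y : poly * mon) := (x.2 == y.2) || bef x.2 y.2.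
have le_total : total le.
  by move=> x y; rewrite /le; case: (eqVneq x.2 y.2) => //= /bef_total.
have le_trans : ssrbool.transitive le.
  move=> y x z; rewrite /le => /orP[/eqP->//|bef_xy] /orP[/eqP<-|bef_yz].
    by rewrite bef_xy orbT.
  by rewrite (bef_trans bef_xy bef_yz) orbT.
set s' := sort le s; have perm_s : perm_eq s' s by rewrite perm_sort.
have uniq_s' : uniq s' by rewrite (perm_uniq perm_s).
pose x0 := (0 : poly, 0%MM : mon); pose row j := nth x0 s' j.
have row_in j : (j < size s')%N -> row j \in s.
  by move=> js; rewrite -(perm_mem perm_s) mem_nth.
have pivot_neq j k : (j < size s')%N -> (k < size s')%N -> j != k -> (row j).2 != (row k).2.
  move=> js ks; apply: contra => /eqP e.
  by rewrite -(nth_uniq x0 js ks uniq_s'); apply/eqP/inj_s; rewrite ?row_in.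
exists (map fst s'); split.
  apply: same_span_trans span_s _; apply/same_span_perm/perm_map.
  by rewrite perm_sym.
exists (map snd s'); rewrite !size_map; split=> //.
- move=> j js; rewrite !(nth_map x0) //; have [first_j _] := rows _ (row_in j js).
  by split=> //; apply: contraTneq first_j.1 => ->; rewrite msupp0.
- by move=> j js; rewrite !(nth_map x0) //; exact: (rows _ (row_in j js)).2.
- move=> j k /andP[jk ks]; have js := ltn_trans jk ks; rewrite !(nth_map x0) //.
  have := sorted_ltn_nth le_trans x0 (sort_sorted le_total s) j k js ks jk.
  by rewrite /le (negbTE (pivot_neq _ _ js ks (negbT (ltn_eqF jk)))).
- move=> j k js ks ne_jk; rewrite !(nth_map x0) //.
  exact: cross (row_in j js) (row_in k ks) (pivot_neq j k js ks ne_jk).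
Qed.

End RowEchelon.

Lemma LT_basis_exists (K : fieldType) (n : nat) (tau : rel 'X_{1..n})
    (H : seq {mpoly K[n]}) :
  term_ordering tau -> exists hs, LT_basis tau H hs.
Proof.
move=> [irr tr tot _ _].
have [hs [span_hs [piv [size_piv first_piv coef_piv sorted_piv cross_piv]]]] :=
  @rref_exists K n (fun t u => tau u t) (fun t1 t2 t3 h12 h23 => tr _ _ _ h23 h12)
    (fun t u ne_tu => ltac:(by rewrite orbC tot)) H.
exists hs; split => //.
- by apply/allP => h /(nthP 0) [j js <-]; have [] := first_piv j js.
- move=> c sum0 j; have := congr1 (mcoeff (nth 0%MM piv j)) sum0.
  rewrite mcoeff0 raddf_sum (bigD1 j) //= mcoeffZ coef_piv // mulr1 big1 ?addr0 // => k ne_kj.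
  by rewrite mcoeffZ cross_piv ?mulr0 // eq_sym.
- exists piv; split => //; last by move=> j /first_piv [].
  apply/(uniqP 0%MM) => j k; rewrite !inE size_piv => js ks e.
  case: (ltngtP j k) => // [jk|kj].
  + by move: (sorted_piv j k); rewrite jk ks e (negbTE (irr _)) => /(_ isT).
  + by move: (sorted_piv k j); rewrite kj js e (negbTE (irr _)) => /(_ isT).
Qed.

Lemma LI_exists (K : fieldType) (n : nat) (Z : seq 'I_n) (gs : seq {mpoly K[n]}) :
  exists hs, LI Z gs hs.
Proof. exact: rref_exists (@colbefore_trans n Z) (@colbefore_total n Z) gs. Qed.

Section Restriction.
Variables (K : fieldType) (n : nat).
Notation mon := 'X_{1..n}.
Notation poly := {mpoly K[n]}.

Definition Zfree (Z : seq 'I_n) (m : mon) := forall k, k \in Z -> m k = 0%N.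

Lemma mdeg_le_pdeg (f : poly) m : m \in msupp f -> (mdeg m <= pdeg f)%N.
Proof. by move=> mf; apply: (@leq_bigmax_seq _ _ xpredT mdeg). Qed.

Lemma msupp_restrictZ (Z : seq 'I_n) (f : poly) :
  supported (fun m => m \in msupp f) (restrictZ Z f).
Proof. by apply: supported_sumX. Qed.

Lemma msupp_sub_restrictZ (Z : seq 'I_n) (f : poly) :
  supported (fun m => m \in msupp f /\ Zfree Z m) (f - restrictZ Z f).
Proof.
have -> : f - restrictZ Z f =
    \sum_(m <- msupp f | ~~ has (fun z => 0 < m z)%N Z) f@_m *: 'X_[m].
  rewrite {1}[f]mpolyE (bigID (fun m : mon => has (fun z => 0 < m z)%N Z)) /=.
  by rewrite /restrictZ addrC addrK.
apply: supported_sumX => m mf no_Z; split=> // k kZ; apply/eqP; rewrite -leqn0 leqNgt.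
by apply: contra no_Z => mk; apply/hasP; exists k.
Qed.

End Restriction.

Section Invariant.
Variables (K : fieldType) (n : nat).
Notation mon := 'X_{1..n}.
Notation poly := {mpoly K[n]}.
Variables (gs : seq poly) (Z0 : seq 'I_n) (delta : nat).
Hypothesis deg_gs : forall g, g \in gs -> forall m, m \in msupp g -> (mdeg m <= delta)%N.
Implicit Types (Z : seq 'I_n) (w : 'I_n -> nat) (f g : poly) (L : seq poly).

Definition ideal_congr (Q : mon -> Prop) g :=
  exists F, in_ideal gs F /\ supported Q (F - g).

Lemma ideal_congr_sub (Q Q' : mon -> Prop) g :
  (forall m, Q m -> Q' m) -> ideal_congr Q g -> ideal_congr Q' g.
Proof. by move=> QQ' [F [IF sF]]; exists F; split=> //; apply: supported_sub sF. Qed.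

Lemma ideal_congr_span Q L f :
  (forall g, g \in L -> ideal_congr Q g) -> in_span L f -> ideal_congr Q f.
Proof.
move=> congr_L; apply: in_span_ind congr_L f
  => [|f1 f2 [F1 [IF1 sF1]] [F2 [IF2 sF2]]|c f1 [F1 [IF1 sF1]]].
- by exists 0; rewrite subrr; split; [exact: in_ideal0 | exact: supported0].
- exists (F1 + F2); split; first exact: in_idealD.
  by rewrite opprD addrACA; apply: supportedD.
- by exists (c *: F1); split; [exact: in_idealZ | rewrite -scalerBr; apply: supportedZ].
Qed.

Lemma ideal_congr_trans Q f g : ideal_congr Q f -> supported Q (f - g) -> ideal_congr Q g.
Proof.
move=> [F [IF sF]] sfg; exists F; split=> //.
by rewrite -[F](subrK f) -addrA; apply: supportedD.
Qed.

Lemma ideal_congrMX (Q Q' : mon -> Prop) (i : 'I_n) g :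
  (forall m, Q m -> Q' (U_(i) + m)%MM) -> ideal_congr Q g -> ideal_congr Q' ('X_i * g).
Proof.
move=> QQ' [F [IF sF]]; exists ('X_i * F); split; first exact: in_idealMl.
by rewrite -mulrBr; apply: supportedMX sF.
Qed.

Definition near_ideal Z w B := ideal_congr (fun m => Zfree Z m /\ (wdeg w m <= B)%N).

Definition separated Z w z := ideal_congr (fun m => Zfree Z m /\ (wdeg w m < w z)%N) 'X_z.

Definition low_degree (g : poly) := supported (fun m => (mdeg m <= delta)%N) g.

Lemma near_ideal_le Z w B B' g : (B <= B')%N -> near_ideal Z w B g -> near_ideal Z w B' g.
Proof. by move=> BB'; apply: ideal_congr_sub => m [? wm]; split=> //; apply: leq_trans BB'. Qed.

Lemma near_idealMX Z w dp (i : 'I_n) B g :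
  (forall k, (w k <= dp)%N) -> i \notin Z ->
  near_ideal Z w B g -> near_ideal Z w (B + dp) ('X_i * g).
Proof.
move=> w_dp iZ; apply: ideal_congrMX => m [Zfree_m wm]; split.
- by move=> k kZ; rewrite mnmDE mnm1E Zfree_m // addn0; case: eqP => // ik; rewrite ik kZ in iZ.
- by rewrite wdegD wdegU addnC leq_add.
Qed.

Lemma near_ideal_Hset Z w dp L h :
  (forall k, (w k <= dp)%N) -> (forall g, g \in L -> near_ideal Z w (delta * dp) g) ->
  h \in Hset Z L -> near_ideal Z w (delta * dp + dp) h.
Proof.
move=> w_dp near_L /allpairsP [[i g] /= [iZ gL ->]].
by apply: near_idealMX (near_L _ gL) => //; move: iZ; rewrite mem_filter => /andP[].
Qed.

Section Shrink.
Variables (Z Z' : seq 'I_n) (w w' : 'I_n -> nat).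
Hypotheses (sub_Z : {subset Z' <= Z}) (w'_out : forall k, k \notin Z -> w' k = w k).

Lemma Zfree_shrink m : Zfree Z m -> Zfree Z' m /\ wdeg w' m = wdeg w m.
Proof.
move=> Zfree_m; split=> [k /sub_Z /Zfree_m //|]; apply: eq_wdeg => k mk.
by apply: w'_out; apply: contra mk => /Zfree_m ->.
Qed.

Lemma near_ideal_shrink B B' g : (B <= B')%N -> near_ideal Z w B g -> near_ideal Z' w' B' g.
Proof.
move=> BB'; apply: ideal_congr_sub => m [/Zfree_shrink [Zfree_m ->] wm].
by split=> //; apply: leq_trans BB'.
Qed.

Lemma separated_shrink z : z \notin Z -> separated Z w z -> separated Z' w' z.
Proof. by move=> zZ; apply: ideal_congr_sub => m [/Zfree_shrink [? ->]]; rewrite w'_out. Qed.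

Lemma separated_of_near B z : (B < w' z)%N -> near_ideal Z w B 'X_z -> separated Z' w' z.
Proof.
move=> Bz; apply: ideal_congr_sub => m [/Zfree_shrink [? ->] wm].
by split=> //; apply: leq_ltn_trans Bz.
Qed.

End Shrink.

Lemma near_ideal_restrict Z w D g :
  (forall k, (w k <= D)%N) -> low_degree g ->
  near_ideal Z w (delta * D) g -> near_ideal Z w (delta * D) (restrictZ Z g).
Proof.
move=> w_D low_g near_g; apply: ideal_congr_trans near_g _.
apply: (supported_sub _ (@msupp_sub_restrictZ _ _ Z g)) => m [mg Zfree_m]; split=> //.
by apply: leq_trans (wdeg_le_mdeg m w_D) _; rewrite mulnC leq_mul2r low_g ?orbT.
Qed.


Lemma next_list_near Z L w dp hs L' :
  (forall k, (w k <= dp)%N) ->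
  (forall g, g \in L -> low_degree g /\ near_ideal Z w (delta * dp) g) ->
  same_span (Hset Z L) hs -> same_span (L ++ [seq h <- hs | (pdeg h <= delta)%N]) L' ->
  forall g, g \in L' -> low_degree g /\ near_ideal Z w (delta * dp + dp) g.
Proof.
move=> w_dp inv_L [_ span_hs] [_ span_L'].
have near_hs h : h \in hs -> near_ideal Z w (delta * dp + dp) h.
  move/in_span_mem/span_hs; apply: ideal_congr_span => x.
  by apply: near_ideal_Hset => // g /inv_L [].
have inv_cat x : x \in L ++ [seq h <- hs | (pdeg h <= delta)%N] ->
    low_degree x /\ near_ideal Z w (delta * dp + dp) x.
  rewrite mem_cat => /orP[/inv_L [low_x near_x]|].
    by split=> //; apply: near_ideal_le near_x; rewrite leq_addr.
  rewrite mem_filter => /andP[deg_x /near_hs near_x]; split=> // m mx.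
  exact: leq_trans (mdeg_le_pdeg mx) deg_x.
move=> g /in_span_mem /span_L' span_g; split.
- by apply: (supported_span _ span_g) => x /inv_cat [].
- by apply: (ideal_congr_span _ span_g) => x /inv_cat [].
Qed.

(* [dp] is the value of [d] in the previous pass (0 before the first one). *)
Definition oc_invariant (s : ocstate K n) : Prop :=
  match s with
  | OCLoop Z L w d => exists dp, [/\ d = (2 * delta * dp + 1)%N, forall k, (w k <= dp)%N,
      forall g, g \in L -> low_degree g /\ near_ideal Z w (delta * dp) g
    & forall z, z \in Z0 -> z \notin Z -> separated Z w z]
  | OCDone (Some W) => forall z, z \in Z0 -> separated [::] W z
  | OCDone None => True
  end.

Lemma oc_invariant_init : oc_invariant (oc_init gs Z0).
Proof.
rewrite /oc_init; case: ifP => // _.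
exists 0%N; split=> [|//|g' /mapP [g gs_g ->]|z ->//]; first by rewrite muln0.
split; first by move=> m /msupp_restrictZ; apply: deg_gs.
exists g; split; first exact: in_ideal_mem.
apply: (supported_sub _ (@msupp_sub_restrictZ _ _ Z0 g)) => m [_ Zfree_m]; split=> //.
by rewrite /wdeg big1 // => i _; rewrite mul0n.
Qed.

Lemma oc_after_invariant Z L' w dp :
  (forall k, (w k <= dp)%N) ->
  (forall g, g \in L' -> low_degree g /\ near_ideal Z w (delta * dp + dp) g) ->
  (forall z, z \in Z0 -> z \notin Z -> separated Z w z) ->
  oc_invariant (oc_after delta Z L' w (2 * delta * dp + 1)).
Proof.
move=> w_dp inv_L' sep_old; rewrite /oc_after.
set d := (2 * delta * dp + 1)%N.
set Zt := [seq z <- Z | 'X_z \in L']; set Z' := [seq z <- Z | z \notin Zt].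
set w' := fun k => if k \in Zt then d else w k.
case: eqP => [//|Zt_ne].
have Zt_sub : {subset Zt <= Z} by move=> z; rewrite mem_filter => /andP[].
have Z'_sub : {subset Z' <= Z} by move=> z; rewrite mem_filter => /andP[].
have w'_out k : k \notin Z -> w' k = w k by rewrite /w'; case: ifP => // /Zt_sub ->.
have near_Zt z : z \in Zt -> near_ideal Z w (delta * dp + dp) 'X_z.
  by rewrite mem_filter => /andP[/inv_L' []].
have delta_pos : (0 < delta)%N.
  have [z zZt] : exists z, z \in Zt by case: (Zt) Zt_ne => [//|z ? _]; exists z; rewrite mem_head.
  move: zZt; rewrite mem_filter => /andP[/inv_L' [low_z _] _].
  by have := low_z U_(z)%MM; rewrite msuppX mem_seq1 eqxx mdeg1 => /(_ isT).
have w'_d k : (w' k <= d)%N by rewrite /w'; case: ifP => // _; apply: leq_trans (w_dp k) _; nia.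
have sep_new z : z \in Z0 -> z \notin Z' -> separated Z' w' z.
  move=> zZ0 zZ'; have [zZ|zZ] := boolP (z \in Z); last first.
    exact: (separated_shrink Z'_sub w'_out zZ (sep_old z zZ0 zZ)).
  have zZt : z \in Zt by move: zZ'; rewrite mem_filter zZ andbT negbK.
  apply: (separated_of_near Z'_sub w'_out _ (near_Zt z zZt)).
  by rewrite /w' zZt; nia.
case: eqP => [Z'0|_].
  by move=> z zZ0; rewrite -Z'0; apply: sep_new; rewrite ?Z'0.
exists d; split=> // g'' /mapP [g gL' ->]; have [low_g near_g] := inv_L' g gL'.
split; first by move=> m /msupp_restrictZ /low_g.
by apply: near_ideal_restrict => //; apply: (near_ideal_shrink Z'_sub w'_out _ near_g); nia.
Qed.

Lemma oc_step_invariant s s' : oc_step delta s s' -> oc_invariant s -> oc_invariant s'.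
Proof.
case=> Z L w d tau hs L' _ _ [_ _ span_hs _] [span_L' _] [dp [-> w_dp inv_L sep_old]].
by apply: oc_after_invariant sep_old => //; apply: next_list_near span_hs span_L'.
Qed.

Lemma oc_reach_invariant s s' : oc_reach delta s s' -> oc_invariant s -> oc_invariant s'.
Proof. by elim=> [x y /oc_step_invariant|x|x y z _ inv_xy _ inv_yz /inv_xy /inv_yz]. Qed.

End Invariant.

Lemma is_LT_of_separated (K : fieldType) (n : nat) W z (F : {mpoly K[n]}) lt :
  supported (fun m => (wdeg W m < W z)%N) (F - 'X_z) ->
  W_compatible W lt -> is_LT lt F U_(z)%MM.
Proof.
move=> sF W_lt; have Uz_nsupp : U_(z)%MM \notin msupp (F - 'X_z).
  by apply/negP => /sF; rewrite wdegU ltnn.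
have F_z : F@_(U_(z)) = 1.
  by move/memN_msupp_eq0/eqP: Uz_nsupp; rewrite mcoeffB mcoeffX eqxx subr_eq0 => /eqP.
split=> [|t tF ne_tz]; first by rewrite mcoeff_msupp F_z oner_neq0.
apply: W_lt; rewrite wdegU; apply: sF.
by rewrite mcoeff_msupp mcoeffB mcoeffX (eq_sym U_(z)%MM) (negbTE ne_tz) subr0 -mcoeff_msupp.
Qed.

Lemma separating_family (K : fieldType) (n : nat) (gs : seq {mpoly K[n]}) (Z : seq 'I_n) W :
  (forall z, z \in Z -> separated gs [::] W z) ->
  exists f : 'I_(size Z) -> {mpoly K[n]},
    [/\ forall i, in_ideal gs (f i), Z_separating f
      & forall lt, term_ordering lt -> W_compatible W lt -> forall i, is_LT lt (f i) (zterm i)].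
Proof.
move=> sep_Z.
have sep_i (i : 'I_(size Z)) :
    exists F, in_ideal gs F /\ forall lt, W_compatible W lt -> is_LT lt F (zterm i).
  have [F [IF sF]] := sep_Z _ (mem_tnth i (in_tuple Z)).
  by exists F; split=> // lt; apply: is_LT_of_separated; apply: (supported_sub _ sF) => m [].
pose f i := proj1_sig (constructive_indefinite_description _ (sep_i i)).
have f_spec i : in_ideal gs (f i) /\ forall lt, W_compatible W lt -> is_LT lt (f i) (zterm i).
  exact: proj2_sig (constructive_indefinite_description _ (sep_i i)).
exists f; split=> [i||lt _ W_lt i]; first exact: (f_spec i).1; last exact: (f_spec i).2.
have [lt [lt_ord W_lt]] := W_compatible_exists W.
by exists lt; split=> // i; apply: (f_spec i).2.
Qed.

Definition oc_measure (K : fieldType) (n : nat) (s : ocstate K n) : nat :=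
  if s is OCLoop Z _ _ _ then (size Z).+1 else 0.

Lemma oc_step_measure (K : fieldType) (n : nat) delta (s s' : ocstate K n) :
  oc_step delta s s' -> (oc_measure s' < oc_measure s)%N.
Proof.
case=> Z L w d tau hs L' _ _ _ _; rewrite /oc_after.
set Zt := [seq z <- Z | 'X_z \in L']; case: eqP => // Zt_ne; case: eqP => //= _.
have [z zZt] : exists z, z \in Zt by case: (Zt) Zt_ne => [//|z ? _]; exists z; rewrite mem_head.
rewrite ltnS size_filter -[size Z](count_predC (fun z => z \notin Zt)).
rewrite -{1}[count _ _]addn0 ltn_add2l -has_count; apply/hasP; exists z; rewrite /= ?negbK //.
by move: zZt; rewrite mem_filter => /andP[].
Qed.

Lemma oc_step_acc (K : fieldType) (n : nat) delta (s : ocstate K n) :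
  Acc (fun y x => oc_step delta x y) s.
Proof.
apply: (Acc_incl _ _ _ _ _ (well_founded_ltof _ (@oc_measure K n) s)) => y x.
by move/oc_step_measure/ssrnat.ltP.
Qed.

Lemma oc_step_progress (K : fieldType) (n : nat) delta (Z : seq 'I_n) (L : seq {mpoly K[n]}) w d :
  exists s', oc_step delta (OCLoop Z L w d) s'.
Proof.
have [hs basis_hs] := LT_basis_exists (Hset Z L) (@mnmc_term_ordering n).
have [L' LI_L'] := LI_exists Z (L ++ [seq h <- hs | (pdeg h <= delta)%N]).
exists (oc_after delta Z L' w d).
exact: OCStep (@mnmc_term_ordering n) (@mnmc_deg_compatible n) basis_hs LI_L'.
Qed.

Theorem mainTheorem4 (K : fieldType) (n : nat) (gs : seq {mpoly K[n]})
    (Z : seq 'I_n) :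
  (0 < size gs)%N ->
  all (fun g => g != 0) gs ->
  ~ in_ideal gs 1 ->
  uniq Z ->
  let delta := \max_(g <- gs) pdeg g in
  let s0 := oc_init gs Z in
  [/\ (* termination: no infinite run of the repeat-loop *)
      Acc (fun y x => oc_step delta x y) s0,
      (* no run gets stuck: every reachable state has returned or can proceed *)
      (forall s, oc_reach delta s0 s ->
         (exists res, s = OCDone res) \/ exists s', oc_step delta s s')
    & (* correctness when a tuple W is returned *)
      forall W : 'I_n -> nat, oc_reach delta s0 (OCDone (Some W)) ->
        exists f : 'I_(size Z) -> {mpoly K[n]},
          [/\ forall i, in_ideal gs (f i),
              Z_separating f
            & forall lt : rel 'X_{1..n}, term_ordering lt -> W_compatible W lt ->
                forall i, is_LT lt (f i) (zterm i)]].
Proof.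
move=> _ _ _ _ delta s0; split.
- exact: oc_step_acc.
- by move=> [Z' L w d|res] _; [right; exact: oc_step_progress | left; exists res].
- move=> W reach; apply: separating_family.
  have deg_gs g : g \in gs -> forall m, m \in msupp g -> (mdeg m <= delta)%N.
    by move=> gs_g m /mdeg_le_pdeg /leq_trans; apply; apply: leq_bigmax_seq.
  exact: (oc_reach_invariant reach (oc_invariant_init Z deg_gs)).
Qed.
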